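(* Let $p$ be a prime and let $(r,e,d)$ be integers such that both $(r,e,d)$ and $(r,e+1,d)$ lie in $\mathscr{B}_0(p)$ (so $d=r-1$). Let $L$ be the $d\times(r+d)$ matrix with $(i,j)$ entry $c_{ip+j-2r}$ ($1\le i\le d$, $1\le j\le r+d$) and $V$ the $(r+d)\times d$ matrix with $(i,j)$ entry $s_{i-j}$ ($1\le i\le r+d$, $1\le j\le d$). Then $LV=M_d(f(x)^{e+1})$.
   Context: $\mathscr{B}_0(p)$ is the set of integer triples $(r,e,d)$ with $2\le r\le p+1$, $(p-1)/2<e\le p-1$, $r(p-1-e)\le p-1$, $d=r-1$. $s_1,\dots,s_r$ are independent indeterminates over $\mathbb{F}_p$, $f(x)=x^r+s_1x^{r-1}+\cdots+s_r$, with the conventions $s_0=1$ and $s_i=0$ for $i<0$ or $i>r$. Write $f(x)^e=\sum_i c_ix^i$ ($c_i=0$ for $i<0$). For $k\ge0$, $M_d(f(x)^{k})$ is the $d\times d$ matrix whose $(i,j)$ entry is the coefficient of $x^{ip+j-d-1}$ in $f(x)^{k}$. *)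

From HB Require Import structures.
From mathcomp Require Import all_boot all_order all_algebra.
From mathcomp Require Import mpoly.
Set Implicit Arguments. Unset Strict Implicit. Unset Printing Implicit Defensive.
Import GRing.Theory.
Local Open Scope ring_scope.

(* The set B_0(p): (r,e,d) with 2 <= r <= p+1, (p-1)/2 < e <= p-1,
   r(p-1-e) <= p-1, d = r-1.  All quantities are naturals here; the
   subtraction p-1-e is exact because e <= p-1 is a conjunct, and
   (p-1)/2 < e is written as the equivalent p-1 < 2e. *)
Definition B0 (p r e d : nat) : Prop :=
  [/\ (2 <= r <= p.+1)%N, (p - 1 < 2 * e)%N, (e <= p - 1)%N,
      (r * (p - 1 - e) <= p - 1)%N & d = (r - 1)%N].

(* ring of coefficients: F_p[s_1, ..., s_r], s_i = 'X_(i-1) *)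
Definition Sring (p r : nat) := {mpoly 'F_p[r]}.

Definition s_ (p r : nat) (i : int) : Sring p r :=
  match i with
  | Posz 0 => 1
  | Posz k.+1 => if @insub _ (fun x => (x < r)%N) 'I_r k is Some m then 'X_m else 0
  | Negz _ => 0
  end.

Definition f_ (p r : nat) : {poly Sring p r} :=
  'X^r + \sum_(1 <= i < r.+1) (s_ p r i)%:P * 'X^(r - i).

Definition zcoef (R : nzRingType) (g : {poly R}) (i : int) : R :=
  match i with Posz k => g`_k | Negz _ => 0 end.

Definition c_ (p r e : nat) (i : int) : Sring p r := zcoef (f_ p r ^+ e) i.

Definition Mmat (R : nzRingType) (p d : nat) (g : {poly R}) : 'M[R]_d :=
  \matrix_(i < d, j < d)
     zcoef g ((i.+1 * p)%:Z + (j.+1)%:Z - d%:Z - 1).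

Definition Lmat (p r e d : nat) : 'M[Sring p r]_(d, r + d) :=
  \matrix_(i < d, j < r + d) c_ p r e ((i.+1 * p)%:Z + (j.+1)%:Z - 2 * r%:Z).

Definition Vmat (p r d : nat) : 'M[Sring p r]_(r + d, d) :=
  \matrix_(i < r + d, j < d) s_ p r ((i.+1)%:Z - (j.+1)%:Z).

(* Since f(x) = sum_t s_t x^(r-t), the coefficient of x^N in f^(e+1) = f^e * f
   is sum_(0 <= t <= r) s_t c_(N-r+t).  In the product LV the entry (i,j) is
   sum_k c_(ip+k-2r) s_(k-j), in which only the r+1 indices k = j+t with
   0 <= t <= r survive; they all lie in 1..r+d because j <= d.  With d = r-1,
   N = ip+j-d-1 = ip+j-r, and the two sums coincide term by term. *)

From HB Require Import structures.
From mathcomp Require Import all_boot all_order all_algebra.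
From mathcomp Require Import mpoly.
From mathcomp Require Import zify.
Local Open Scope ring_scope.
Import GRing.Theory.

Lemma big_ord_window (R : nmodType) (m j w : nat) (F : nat -> R) :
    (j + w <= m)%N -> (forall k, (k < j)%N || (j + w <= k)%N -> F k = 0) ->
  \sum_(k < m) F k = \sum_(t < w) F (j + t)%N.
Proof.
move=> le_jw_m F_out.
rewrite -(big_mkord xpredT) (big_cat_nat (n := j)) //=; last first.
  exact: leq_trans (leq_addr w j) le_jw_m.
rewrite (big_cat_nat (n := j + w) (leq_addr w j) le_jw_m) /=.
rewrite big1_seq ?add0r => [|k]; last first.
  by rewrite /= mem_index_iota => /andP[_ lt_kj]; rewrite F_out ?lt_kj.
rewrite [X in _ + X]big1_seq ?addr0 => [|k]; last first.
  by rewrite /= mem_index_iota => /andP[le_jw_k _]; rewrite F_out ?le_jw_k ?orbT.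
rewrite -{1}[j]add0n big_addn addKn big_mkord.
by apply: eq_bigr => t _; rewrite addnC.
Qed.

Section IntegerIndexedCoefficients.

Variable R : nzRingType.
Implicit Types (g : {poly R}) (N : int).

Lemma zcoefMXn g k N : zcoef (g * 'X^k) N = zcoef g (N - k%:Z).
Proof.
case: N => [n|n] /=; last by have -> : Negz n - k%:Z = Negz (n + k) by lia.
rewrite coefMXn; case: ltnP => [lt_nk|le_kn]; last by rewrite subzn.
by have -> : n%:Z - k%:Z = Negz (k - n).-1 by rewrite NegzE; lia.
Qed.

Lemma zcoef_sum I (s : seq I) (F : I -> {poly R}) N :
  zcoef (\sum_(i <- s) F i) N = \sum_(i <- s) zcoef (F i) N.
Proof. by case: N => [n|n] /=; [exact: coef_sum | rewrite big1]. Qed.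

Lemma zcoefCM (c : R) g N : zcoef (c%:P * g) N = c * zcoef g N.
Proof. by case: N => [n|n] /=; rewrite ?coefCM ?mulr0. Qed.

End IntegerIndexedCoefficients.

Lemma zcoefM_desc (R : comNzRingType) (g : {poly R}) (n : nat)
    (a : 'I_n.+1 -> R) (N : int) :
  zcoef (g * \sum_(t < n.+1) (a t)%:P * 'X^(n - t)) N
    = \sum_(t < n.+1) a t * zcoef g (N - n%:Z + t%:Z).
Proof.
rewrite mulr_sumr zcoef_sum; apply: eq_bigr => t _.
rewrite mulrCA zcoefCM zcoefMXn; congr (_ * zcoef _ _).
have := ltn_ord t; lia.
Qed.

Lemma s_lt0 p r (z : int) : z < 0 -> s_ p r z = 0.
Proof. by case: z. Qed.

Lemma s_gt p r (z : int) : r%:Z < z -> s_ p r z = 0.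
Proof. by case: z => [[|k]|k] //= lt_r_k; rewrite insubN // -ltnNge; lia. Qed.

Lemma f_desc p r : f_ p r = \sum_(t < r.+1) (s_ p r t)%:P * 'X^(r - t).
Proof.
by rewrite /f_ big_ord_recl /= subn0 mul1r big_add1 /= big_mkord.
Qed.

Lemma c_exprS p r e (N : int) :
  c_ p r e.+1 N = \sum_(t < r.+1) s_ p r t * c_ p r e (N - r%:Z + t%:Z).
Proof. by rewrite /c_ exprSr {2}f_desc zcoefM_desc. Qed.

Lemma mulmx_LV p r e d (i j : 'I_d) :
  (Lmat p r e d *m Vmat p r d) i j
    = \sum_(t < r.+1) c_ p r e ((i.+1 * p)%:Z + (j + t).+1%:Z - 2 * r%:Z)
                      * s_ p r t.
Proof.
rewrite mxE; under eq_bigr do rewrite !mxE.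
rewrite (@big_ord_window _ _ j r.+1 (fun k =>
  c_ p r e ((i.+1 * p)%:Z + k.+1%:Z - 2 * r%:Z) * s_ p r (k.+1%:Z - j.+1%:Z))).
- by apply: eq_bigr => t _; congr (_ * s_ _ _ _); lia.
- by rewrite addnC ltn_add2l.
move=> k /orP[lt_kj|le_jr_k].
  by rewrite s_lt0 ?mulr0 //; lia.
by rewrite s_gt ?mulr0 //; lia.
Qed.

Theorem lemma10 (p r e d : nat) :
  prime p -> B0 p r e d -> B0 p r e.+1 d ->
  Lmat p r e d *m Vmat p r d = Mmat p d (f_ p r ^+ e.+1).
Proof.
move=> _ [/andP[r_ge2 _] _ _ _ ->] _.
apply/matrixP=> i j; rewrite mulmx_LV !mxE -/(c_ p r e.+1 _) c_exprS.
apply: eq_bigr => t _; rewrite mulrC; congr (_ * c_ _ _ _ _); lia.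
Qed.
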